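(* For every homogeneous ideal $I^h\subset\mathbb{K}[S_M^h]$ and every graded sparse order $\prec_h$, there exists a finite sparse Gröbner basis of $I^h$ with respect to $\prec_h$.
   Context: Let $\mathbb{K}$ be a field of characteristic $0$, $M\subset\mathbb{R}^n$ a polytope with $0\in M$, $S_M\subset\mathbb{Z}^n$ the affine semigroup generated by $M\cap\mathbb{Z}^n$ and $S_M^h\subset\mathbb{Z}^{n+1}$ the one generated by $\{(s,1):s\in M\cap\mathbb{Z}^n\}$, both assumed pointed. $\mathbb{K}[S]$ is the semigroup algebra with monomials $X^s$, $X^sX^t=X^{s+t}$; $\mathbb{K}[S_M^h]$ is graded by $\deg X^{(s,d)}=d$ and ''homogeneous'' refers to this grading. $\chi:\mathbb{K}[S_M^h]\to\mathbb{K}[S_M]$, $X^{(s,d)}\mapsto X^s$. The affine degree $\delta^A(X^s)$ is the least $d$ with $(s,d)\in S_M^h$, extended to polynomials by the maximum over the support; the sparse degree of $f\in\mathbb{K}[S_M^h]$ is $\delta(f)=\delta^A(\chi(f))$. Given a monomial order $<_M$ on $\mathbb{K}[S_M]$, the sparse order is $X^s\prec X^r$ iff $\delta^A(X^s)<\delta^A(X^r)$, or equality and $X^s<_MX^r$; the associated graded sparse order on monomials of $\mathbb{K}[S_M^h]$ is $X^{(s,d)}\prec_hX^{(r,d')}$ iff $d<d'$, or $d=d'$ and $X^s\prec X^r$. Divisibility: $X^{(s,d_s)}\mid_\delta X^{(r,d_r)}$ if some monomial $X^{(t,d_t)}$ satisfies $X^{(s,d_s)}X^{(t,d_t)}=X^{(r,d_r)}$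 and $\delta(X^{(s,d_s)})+\delta(X^{(t,d_t)})=\delta(X^{(r,d_r)})$. A sparse Gröbner basis of $I^h$ w.r.t. $\prec_h$ is a subset of $I^h$ generating $I^h$ such that for every nonzero $f\in I^h$ some element $g$ of it satisfies $\mathrm{LM}_{\prec_h}(g)\mid_\delta\mathrm{LM}_{\prec_h}(f)$. *)

From HB Require Import structures.
From mathcomp Require Import all_boot all_order all_algebra.
From mathcomp Require Import finmap.
From mathcomp.multinomials Require Import monalg.
From mathcomp Require Import boolp reals.
Set Implicit Arguments. Unset Strict Implicit. Unset Printing Implicit Defensive.
Import Order.TTheory GRing.Theory Num.Theory.
Local Open Scope ring_scope.

(* Z^n (exponents of K[S_M]) and Z^{n+1} = Z^n x Z (exponents of K[S_M^h]). *)
Definition pt (n : nat) := 'rV[int]_n.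
Definition hpt (n : nat) := ('rV[int]_n * int)%type.

(* M = conv(V) : the polytope spanned by the finite point set V in R^n. *)
Definition in_conv (R : realType) (n : nat) (V : seq 'rV[R]_n) (x : 'rV[R]_n)
  : Prop :=
  exists lam : 'I_(size V) -> R,
    (forall i, 0 <= lam i) /\ \sum_i lam i = 1 /\ x = \sum_i lam i *: V`_i.

Definition latt (R : realType) (n : nat) (V : seq 'rV[R]_n) (s : pt n) : Prop :=
  in_conv V (map_mx (fun z : int => z%:~R) s).

Definition inSM (R : realType) (n : nat) (V : seq 'rV[R]_n) (s : pt n) : Prop :=
  exists ts : seq (pt n), (forall t, t \in ts -> latt V t) /\
    s = \sum_(t <- ts) t.

(* S_M^h : affine semigroup generated by {(s,1) : s ∈ M ∩ Z^n} *)
Definition inSMh (R : realType) (n : nat) (V : seq 'rV[R]_n) (p : hpt n) : Prop :=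
  exists ts : seq (pt n), (forall t, t \in ts -> latt V t) /\
    p = (\sum_(t <- ts) t, (size ts)%:Z).

Definition pointed (G : zmodType) (S : G -> Prop) : Prop :=
  forall x, S x -> S (- x) -> x = 0.

(* Laurent-type ambient algebra K[Z^{n+1}] as finitely supported functions;
   K[S_M^h] is the subset of those supported in S_M^h. *)
Definition Lpoly (K : fieldType) (n : nat) := {malg K[hpt n]}.

Definition inKSh (K : fieldType) (R : realType) (n : nat) (V : seq 'rV[R]_n)
  (f : Lpoly K n) : Prop :=
  forall x, x \in msupp f -> inSMh V x.

Definition lmul (K : fieldType) (n : nat) (f g : Lpoly K n) : Lpoly K n :=
  \sum_(a <- msupp f) \sum_(b <- msupp g) << f@_a * g@_b *g (a + b) >>.

Definition is_ideal (K : fieldType) (R : realType) (n : nat) (V : seq 'rV[R]_n)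
  (I : Lpoly K n -> Prop) : Prop :=
  [/\ forall f, I f -> inKSh V f,
      I 0,
      forall f g, I f -> I g -> I (f + g) &
      forall f g, inKSh V g -> I f -> I (lmul g f)].

Definition hcomp (K : fieldType) (n : nat) (d : int) (f : Lpoly K n) : Lpoly K n :=
  [malg x in msupp f => if x.2 == d then f@_x else 0].

Definition homogeneous_ideal (K : fieldType) (n : nat) (I : Lpoly K n -> Prop)
  : Prop :=
  forall f d, I f -> I (hcomp d f).

Definition monomial_order (R : realType) (n : nat) (V : seq 'rV[R]_n)
  (lt : pt n -> pt n -> Prop) : Prop :=
  [/\ forall s, inSM V s -> ~ lt s s,
      forall s t u, inSM V s -> inSM V t -> inSM V u -> lt s t -> lt t u -> lt s u,
      forall s t, inSM V s -> inSM V t -> s = t \/ lt s t \/ lt t s,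
      forall s t u, inSM V s -> inSM V t -> inSM V u -> lt s t -> lt (s + u) (t + u) &
      forall P : pt n -> Prop, (exists s, inSM V s /\ P s) ->
        exists m, [/\ inSM V m, P m & forall s, inSM V s -> P s -> ~ lt s m]].

Lemma ex_asbool (P : nat -> Prop) :
  (exists d, P d) -> exists d, `[< P d >].
Proof. by case=> d Pd; exists d; apply/asboolP. Qed.

(* affine degree δ^A(X^s) = least d with (s,d) ∈ S_M^h (0 if s ∉ S_M) *)
Definition deltaA (R : realType) (n : nat) (V : seq 'rV[R]_n) (s : pt n) : nat :=
  match pselect (exists d : nat, inSMh V (s, d%:Z)) with
  | left H => ex_minn (ex_asbool H)
  | right _ => 0%N
  end.

Definition sdeg (R : realType) (n : nat) (V : seq 'rV[R]_n) (p : hpt n) : nat :=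
  deltaA V p.1.

Definition sparse_lt (R : realType) (n : nat) (V : seq 'rV[R]_n)
  (lt : pt n -> pt n -> Prop) (s r : pt n) : Prop :=
  (deltaA V s < deltaA V r)%N \/ (deltaA V s = deltaA V r /\ lt s r).

Definition gsparse_lt (R : realType) (n : nat) (V : seq 'rV[R]_n)
  (lt : pt n -> pt n -> Prop) (p q : hpt n) : Prop :=
  p.2 < q.2 \/ (p.2 = q.2 /\ sparse_lt V lt p.1 q.1).

Definition isLM (K : fieldType) (R : realType) (n : nat) (V : seq 'rV[R]_n)
  (lt : pt n -> pt n -> Prop) (f : Lpoly K n) (m : hpt n) : Prop :=
  m \in msupp f /\
  forall m', m' \in msupp f -> m' <> m -> gsparse_lt V lt m' m.

Definition ddiv (R : realType) (n : nat) (V : seq 'rV[R]_n) (a b : hpt n) : Prop :=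
  exists t : hpt n, [/\ inSMh V t, a + t = b & (sdeg V a + sdeg V t = sdeg V b)%N].

Definition sparse_GB (K : fieldType) (R : realType) (n : nat) (V : seq 'rV[R]_n)
  (lt : pt n -> pt n -> Prop) (I : Lpoly K n -> Prop) (G : seq (Lpoly K n)) : Prop :=
  [/\ forall g, g \in G -> I g,
      forall f, I f -> exists c : 'I_(size G) -> Lpoly K n,
        (forall i, inKSh V (c i)) /\ f = \sum_(i < size G) lmul (c i) G`_i &
      forall f, I f -> f <> 0 ->
        exists g, g \in G /\
          exists mg mf, [/\ isLM V lt g mg, isLM V lt f mf & ddiv V mg mf]].

From HB Require Import structures.
From mathcomp Require Import all_boot all_order all_algebra.
From mathcomp Require Import finmap.
From mathcomp.multinomials Require Import monalg.
From mathcomp Require Import boolp reals.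
From mathcomp Require Import zify.
Import Order.TTheory GRing.Theory Num.Theory.
Set Implicit Arguments. Unset Strict Implicit. Unset Printing Implicit Defensive.

(* An exponent p = (s, d) of K[S_M^h] is coded by a vector of naturals: the
   multiplicities of the finitely many lattice points of M in a shortest
   decomposition of s, followed by the excess d - δ^A(s).  If the code of a is
   componentwise below that of b, the lattice points left over in the
   decomposition of b form an exponent t with a + t = b and δ(a) + δ(t) = δ(b),
   i.e. a |_δ b.  Dickson's lemma applied to the codes of the leading monomials
   of I therefore yields a finite G ⊆ I whose leading monomials δ-divide every
   leading monomial of I.  Since ≺_h well-orders S_M^h and is compatible with
   such products, the usual division argument shows that G generates I. *)

Section Dickson.
Variable A : eqType.

Definition dominated k (phi : A -> nat -> nat) (a b : A) :=
  forall j, j < k -> phi a j <= phi b j.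

Definition dickson_basis k phi (L : A -> Prop) (F : seq A) :=
  (forall a, a \in F -> L a) /\
  (forall b, L b -> exists2 a, a \in F & dominated k phi a b).

Lemma dickson_basis_bigcup k phi m (L : nat -> A -> Prop) :
  (forall i, i < m -> exists F, dickson_basis k phi (L i) F) ->
  exists F, dickson_basis k phi (fun a => exists2 i, i < m & L i a) F.
Proof.
elim: m => [|m IHm] baseL; first by exists [::]; split => // b [].
have [Fm [FmL Fmdom]] := baseL m (ltnSn m).
have [F [FL Fdom]] := IHm (fun i lt_im => baseL i (ltnW lt_im)).
exists (Fm ++ F); split => [a|b [i le_im Lib]].
  rewrite mem_cat => /orP [/FmL|/FL [i /ltnW]]; last by exists i.
  by exists m.
move: le_im; rewrite ltnS leq_eqVlt => /orP [/eqP eq_im|lt_im].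
  have [a aFm dom_ab] : exists2 a, a \in Fm & dominated k phi a b.
    by apply: Fmdom; rewrite -eq_im.
  by exists a; rewrite ?mem_cat ?aFm.
have [a aF dom_ab] := Fdom b (ex_intro2 _ _ i lt_im Lib).
by exists a; rewrite ?mem_cat ?aF ?orbT.
Qed.

Lemma dickson_basis_slice k phi (L : A -> Prop) i v : i <= k ->
  (forall psi L', exists F, dickson_basis k psi L' F) ->
  exists F, dickson_basis k.+1 phi (fun b => L b /\ phi b i = v) F.
Proof.
move=> le_ik dickson_k.
have [F [FL Fdom]] := dickson_k (fun b j => phi b (bump i j)) (fun b => L b /\ phi b i = v).
exists F; split => // b Lb; have [a aF dom_ab] := Fdom b Lb.
exists a => // j lt_jk; have [->|neq_ji] := eqVneq j i.
  by have [_ ->] := FL a aF; case: Lb => _ ->.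
rewrite -(unbumpK (h := i) (x := j)) ?inE //; apply: dom_ab.
by move: lt_jk neq_ji; rewrite /unbump; case: ltnP => /=; lia.
Qed.

Lemma dickson k phi (L : A -> Prop) : exists F, dickson_basis k phi L F.
Proof.
elim: k => [|k IHk] in phi L *.
  have [[b Lb]|noL] := pselect (exists b, L b).
    by exists [:: b]; split => [a|c _]; [rewrite inE => /eqP -> | exists b; rewrite ?inE].
  by exists [::]; split => // b Lb; case: noL; exists b.
have [[x0 Lx0]|noL] := pselect (exists b, L b); last first.
  by exists [::]; split => // b Lb; case: noL; exists b.
(* An element of L not dominating x0 lies in one of finitely many slices. *)
pose below b := exists2 i, i < k.+1 & exists2 v, v < phi x0 i & L b /\ phi b i = v.
have [F [FL Fdom]] : exists F, dickson_basis k.+1 phi below F.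
  apply: dickson_basis_bigcup => i lt_ik.
  apply: dickson_basis_bigcup => v _.
  exact: dickson_basis_slice.
exists (x0 :: F); split => [a|b Lb].
  by rewrite inE => /orP [/eqP ->|/FL [i _ [v _ []]]].
have [dom_x0b|not_dom] := pselect (dominated k.+1 phi x0 b).
  by exists x0; rewrite ?inE ?eqxx.
have [a aF dom_ab] : exists2 a, a \in F & dominated k.+1 phi a b.
  apply: Fdom; apply: contrapT => not_below; apply: not_dom => j lt_jk.
  by rewrite leqNgt; apply/negP => lt_b; apply: not_below; exists j => //; exists (phi b j).
by exists a; rewrite ?inE ?aF ?orbT.
Qed.

End Dickson.

Local Open Scope ring_scope.

Section LatticePoints.
Variables (R : realType) (n : nat) (V : seq 'rV[R]_n).

Lemma latt_bounded : exists N : nat, forall s, latt V s -> forall j, `|s 0 j| <= N%:Z.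
Proof.
set B := \sum_(i < size V) \sum_(j < n) `|V`_i 0 j|.
have B_ge0 : 0 <= B by apply: sumr_ge0 => i _; apply: sumr_ge0.
exists (Num.Def.archi_bound B) => s [lam [lam_ge0 [lam_sum1 s_conv]]] j.
have lam_le1 i : lam i <= 1 by rewrite -lam_sum1 (bigD1 i) //= lerDl sumr_ge0.
have s_coord : (s 0 j)%:~R = \sum_i lam i * V`_i 0 j.
  have := congr1 (fun x : 'rV[R]_n => x 0 j) s_conv.
  by rewrite /= mxE summxE => ->; apply: eq_bigr => i _; rewrite mxE.
have : `|(s 0 j)%:~R : R| < (Num.Def.archi_bound B)%:R.
  apply: le_lt_trans (archi_boundP B_ge0).
  rewrite s_coord; apply: le_trans (ler_norm_sum _ _ _) _.
  apply: ler_sum => i _; rewrite normrM (ger0_norm (lam_ge0 i)).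
  apply: (@le_trans _ _ `|V`_i 0 j|); first by rewrite ler_piMl.
  by rewrite (bigD1 j) //= lerDl sumr_ge0.
rewrite -intr_norm -pmulrn ltr_nat; lia.
Qed.

Lemma latt_finite : exists P : seq (pt n), forall s, latt V s -> s \in P.
Proof.
have [N latt_le] := latt_bounded.
pose shift (f : {ffun 'I_n -> 'I_(N + N).+1}) : pt n := \row_j ((f j : nat)%:Z - N%:Z).
exists (map shift (enum {ffun 'I_n -> 'I_(N + N).+1})) => s Ls.
pose f := [ffun j : 'I_n => (inord (absz (s 0 j + N%:Z)) : 'I_(N + N).+1)].
suff -> : s = shift f by apply: map_f; rewrite mem_enum.
apply/matrixP => i j; rewrite !mxE ffunE (ord1 i).
have s_le := latt_le s Ls j; rewrite inordK; lia.
Qed.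

End LatticePoints.

Section AffineDegree.
Variables (R : realType) (n : nat) (V : seq 'rV[R]_n).

Lemma hptD (s t : pt n) (d e : int) : ((s, d) + (t, e) : hpt n) = (s + t, d + e).
Proof. by []. Qed.

Lemma inSMhD p q : inSMh V p -> inSMh V q -> inSMh V (p + q).
Proof.
move: p q => [s d] [s' d'] [ts [tsL [-> ->]]] [ts' [ts'L [-> ->]]].
exists (ts ++ ts'); split; last by rewrite big_cat size_cat PoszD.
by move=> t; rewrite mem_cat => /orP [/tsL|/ts'L].
Qed.

Lemma inSMh_deg p : inSMh V p -> exists d : nat, p.2 = d%:Z.
Proof. by case=> ts [_ ->]; exists (size ts). Qed.

Lemma inSMh_inSM p : inSMh V p -> inSM V p.1.
Proof. by case=> ts [tsL ->]; exists ts. Qed.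

Lemma inSM_inSMh s : inSM V s -> exists d : nat, inSMh V (s, d%:Z).
Proof. by case=> ts [tsL ->]; exists (size ts), ts. Qed.

Lemma deltaA_leq s (d : nat) : inSMh V (s, d%:Z) -> (deltaA V s <= d)%N.
Proof.
move=> Ssd; rewrite /deltaA; case: pselect => [ex_d|]; last by case; exists d.
by case: ex_minnP => m _; apply; apply/asboolP.
Qed.

Lemma inSMh_deltaA s : inSM V s -> inSMh V (s, (deltaA V s)%:Z).
Proof.
case/inSM_inSMh => d Ssd; rewrite /deltaA; case: pselect => [ex_d|]; last by case; exists d.
by case: ex_minnP => m /asboolP.
Qed.

Lemma deltaA_le_deg p : inSMh V p -> (deltaA V p.1)%:Z <= p.2.
Proof.
move: p => [s d] Sp; have [e /= de] := inSMh_deg Sp.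
by rewrite de lez_nat; apply: deltaA_leq; rewrite -de.
Qed.

Lemma deltaAD_le s t : inSM V s -> inSM V t ->
  (deltaA V (s + t)%R <= deltaA V s + deltaA V t)%N.
Proof.
move=> /inSMh_deltaA Ss /inSMh_deltaA St.
by apply: deltaA_leq; rewrite PoszD; apply: (inSMhD Ss St).
Qed.

Definition shortest_decomp (s : pt n) (ts : seq (pt n)) :=
  [/\ forall t, t \in ts -> latt V t, s = \sum_(t <- ts) t & size ts = deltaA V s].

Lemma shortest_decomp_exists s : inSM V s -> exists ts, shortest_decomp s ts.
Proof. by case/inSMh_deltaA => ts [tsL [-> [size_ts]]]; exists ts. Qed.

Hypothesis zeroM : in_conv V 0.

Lemma latt0 : latt V 0.
Proof. by rewrite /latt map_mx0. Qed.

Lemma inSMh_raise s (d e : nat) : inSMh V (s, d%:Z) -> (d <= e)%N -> inSMh V (s, e%:Z).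
Proof.
move=> Ssd le_de; have S0 : inSMh V (0, (e - d)%N%:Z).
  exists (nseq (e - d) 0); split; last by rewrite size_nseq big_nseq iter_addr_0 mul0rn.
  by move=> t /nseqP [-> _]; apply: latt0.
by have := inSMhD Ssd S0; rewrite hptD addr0 -PoszD subnKC.
Qed.

End AffineDegree.

Section GradedSparseOrder.
Variables (R : realType) (n : nat) (V : seq 'rV[R]_n).
Variable lt : pt n -> pt n -> Prop.
Hypothesis ltM : monomial_order V lt.

Local Notation glt := (gsparse_lt V lt).
Local Notation SH := (inSMh V).
Local Notation dA := (deltaA V).

Lemma gsparse_lt_irr p : SH p -> ~ glt p p.
Proof.
case: ltM => irr _ _ _ _ /inSMh_inSM Sp.
by case=> [|[_ [|[_ /irr]]]]; rewrite ?ltxx ?ltnn.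
Qed.

Lemma gsparse_lt_trans p q r : SH p -> SH q -> SH r -> glt p q -> glt q r -> glt p r.
Proof.
case: ltM => _ trans _ _ _ /inSMh_inSM Sp /inSMh_inSM Sq /inSMh_inSM Sr.
case=> [lt_pq|[eq_pq s_pq]] [lt_qr|[eq_qr s_qr]].
- by left; apply: lt_trans lt_pq lt_qr.
- by left; rewrite -eq_qr.
- by left; rewrite eq_pq.
right; split; first by rewrite eq_pq.
case: s_pq => [d_pq|[e_pq l_pq]]; case: s_qr => [d_qr|[e_qr l_qr]].
- by left; apply: ltn_trans d_pq d_qr.
- by left; rewrite -e_qr.
- by left; rewrite e_pq.
by right; split; [rewrite e_pq | apply: trans l_pq l_qr].
Qed.

Lemma gsparse_lt_total p q : SH p -> SH q -> p = q \/ glt p q \/ glt q p.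
Proof.
case: ltM => _ _ total _ _.
move: p q => [s d] [s' d'] /inSMh_inSM Ss /inSMh_inSM Ss'.
rewrite /gsparse_lt /sparse_lt /=.
case: (ltgtP d d') => [lt_d|lt_d|<-]; [by right; left; left | by right; right; left|].
case: (ltngtP (dA s) (dA s')) => [lt_e|lt_e|eq_e].
- by right; left; right; split => //; left.
- by right; right; right; split => //; left.
case: (total s s' Ss Ss') => [->|[l_ss'|l_s's]]; first by left.
- by right; left; right; split => //; right.
- by right; right; right; split => //; right.
Qed.

Lemma gsparse_lt_addr p q t : SH p -> SH q -> SH t ->
  (dA q.1 + dA t.1 = dA (q + t)%R.1)%N -> glt p q -> glt (p + t) (q + t).
Proof.
case: ltM => _ _ _ addr _.
move: p q t => [s d] [s' d'] [u e] Sp Sq St; rewrite !hptD /= => dAq.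
have Ss := inSMh_inSM Sp; have Ss' := inSMh_inSM Sq; have Su := inSMh_inSM St.
have dAp := deltaAD_le Ss Su; rewrite /= in dAp.
rewrite /gsparse_lt /sparse_lt /=.
case=> [lt_d|[eq_d s_lt]]; first by left; rewrite ltrD2r.
right; split; first by rewrite eq_d.
case: s_lt => [lt_e|[eq_e l_ss']]; first by left; lia.
have : (dA (s + u)%R <= dA (s' + u)%R)%N by lia.
rewrite leq_eqVlt => /orP [/eqP eq_su|]; last by left.
by right; split => //; apply: addr.
Qed.

Lemma gsparse_lt_min (Q : hpt n -> Prop) : (exists p, SH p /\ Q p) ->
  exists m, [/\ SH m, Q m & forall p, SH p -> Q p -> ~ glt p m].
Proof.
case: ltM => _ _ _ _ lt_min [[s d] [Sp Qp]].
(* Minimize successively the degree, the affine degree and then w.r.t. [lt]. *)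
pose Qd d0 := exists s0, SH (s0, d0%:Z) /\ Q (s0, d0%:Z).
have [d' /= eq_d] := inSMh_deg Sp; rewrite eq_d in Sp Qp.
case: (ex_minnP (ex_asbool (ex_intro Qd d' (ex_intro _ s (conj Sp Qp))))).
move=> d0 /asboolP [s0 [S0 Q0]] d0_min.
pose Qe e0 := exists s1, [/\ SH (s1, d0%:Z), Q (s1, d0%:Z) & dA s1 = e0].
case: (ex_minnP (ex_asbool (ex_intro Qe (dA s0) (ex_intro _ s0 (And3 S0 Q0 erefl))))).
move=> e0 /asboolP [s1 [S1 Q1 e_s1]] e0_min.
have [m [_ [Sm Qm e_m] m_min]] :=
  lt_min (fun s2 => [/\ SH (s2, d0%:Z), Q (s2, d0%:Z) & dA s2 = e0])
         (ex_intro _ s1 (conj (inSMh_inSM S1) (And3 S1 Q1 e_s1))).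
exists (m, d0%:Z); split => // -[s2 d2] S2 Q2.
have [d3 /= eq_d3] := inSMh_deg S2; rewrite eq_d3 in S2 Q2 *.
have le_d := d0_min d3 (asboolT (ex_intro _ s2 (conj S2 Q2))).
case=> [/=|[/= /eqP]]; rewrite ?ltz_nat ?eqz_nat; first by lia.
move=> /eqP eq_d0; rewrite eq_d0 in S2 Q2.
have le_e := e0_min (dA s2) (asboolT (ex_intro _ s2 (And3 S2 Q2 erefl))).
case=> [|[e_s2 lt_s2]]; first by lia.
by apply: (m_min s2 (inSMh_inSM S2)) => //; split => //; rewrite e_s2.
Qed.

Lemma gsparse_lt_ind (P : hpt n -> Prop) :
  (forall m, SH m -> (forall p, SH p -> glt p m -> P p) -> P m) ->
  forall m, SH m -> P m.
Proof.
move=> ind m Sm; apply: contrapT => not_Pm.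
have [m0 [Sm0 not_Pm0 m0_min]] :=
  gsparse_lt_min (Q := fun p => ~ P p) (ex_intro _ m (conj Sm not_Pm)).
apply: not_Pm0; apply: ind => // p Sp lt_pm0.
by apply: contrapT => not_Pp; apply: m0_min lt_pm0.
Qed.

Lemma gsparse_lt_max_seq (s : seq (hpt n)) : s != [::] -> (forall p, p \in s -> SH p) ->
  exists2 m, m \in s & forall p, p \in s -> p <> m -> glt p m.
Proof.
elim: s => [//|x s IHs] _ sS.
have Sx : SH x by apply: sS; rewrite mem_head.
have [->|s_neq0] := eqVneq s [::].
  by exists x; rewrite ?mem_head // => p; rewrite inE => /eqP.
have sS' p : p \in s -> SH p by move=> ps; apply: sS; rewrite inE ps orbT.
have [m ms m_max] := IHs s_neq0 sS'.
have Sm := sS' m ms.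
have [eq_xm|[lt_xm|lt_mx]] := gsparse_lt_total Sx Sm.
- exists m; rewrite ?inE ?ms ?orbT // => p.
  by rewrite inE => /orP [/eqP -> /(_ eq_xm) []|/m_max].
- exists m; rewrite ?inE ?ms ?orbT // => p.
  by rewrite inE => /orP [/eqP -> //|/m_max].
exists x; rewrite ?mem_head // => p; rewrite inE => /orP [/eqP -> //|ps _].
have [-> //|neq_pm] := eqVneq p m.
exact: gsparse_lt_trans (sS' p ps) Sm Sx (m_max p ps (elimN eqP neq_pm)) lt_mx.
Qed.

End GradedSparseOrder.

Section Lmul.
Variables (K : fieldType) (n : nat).
Implicit Types f g : Lpoly K n.

Lemma lmulE (d1 d2 : {fset hpt n}) f g :
  (msupp f `<=` d1)%fset -> (msupp g `<=` d2)%fset ->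
  lmul f g = \sum_(a <- d1) \sum_(b <- d2) << f@_a * g@_b *g (a + b) >>.
Proof.
move=> le_d1 le_d2; rewrite /lmul (big_fset_incl _ le_d1) /=.
  apply/eq_bigr=> a _; apply/big_fset_incl => // b _ /mcoeff_outdom ->.
  by rewrite mulr0 monalgU0.
move=> a _ /mcoeff_outdom ->.
by rewrite big1 => // b _; rewrite mul0r monalgU0.
Qed.

Lemma lmul0l g : lmul 0 g = 0.
Proof. by rewrite /lmul msupp0 big_seq_fset0. Qed.

Lemma lmulDl f1 f2 g : lmul (f1 + f2) g = lmul f1 g + lmul f2 g.
Proof.
rewrite (lmulE (msuppD_le f1 f2) (fsubset_refl (msupp g))).
rewrite (lmulE (fsubsetUl (msupp f1) (msupp f2)) (fsubset_refl (msupp g))).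
rewrite (lmulE (fsubsetUr (msupp f1) (msupp f2)) (fsubset_refl (msupp g))).
rewrite -big_split; apply: eq_bigr => a _; rewrite -big_split; apply: eq_bigr => b _.
by rewrite mcoeffD mulrDl monalgUD.
Qed.

Lemma lmulNl f g : lmul (- f) g = - lmul f g.
Proof. by apply/eqP; rewrite -addr_eq0 -lmulDl addNr lmul0l. Qed.

Lemma mcoeff_lmulU c t g b : (lmul << c *g t >> g)@_(t + b) = c * g@_b.
Proof.
rewrite (lmulE msuppU_le (fsubset_refl (msupp g))) big_seq_fset1 mcoeffUU raddf_sum /=.
have -> : g@_b = \sum_(b' <- msupp g) g@_b' *+ (b' == b).
  by rewrite {1}(monalgE g) raddf_sum /=; apply: eq_bigr => b' _; rewrite mcoeffU.
rewrite mulr_sumr; apply: eq_bigr => b' _.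
by rewrite !mcoeffU (inj_eq (addrI t)) mulrnAr.
Qed.

Lemma msupp_lmulU c t g x : x \in msupp (lmul << c *g t >> g) ->
  exists2 b, b \in msupp g & x = t + b.
Proof.
move=> xs; apply: contrapT => x_notin; move: xs; rewrite -mcoeff_neq0 => /negP; apply.
rewrite (lmulE msuppU_le (fsubset_refl (msupp g))) big_seq_fset1 raddf_sum /=.
apply/eqP; rewrite big1_fset // => b bg _; rewrite mcoeffU.
by case: eqP => // eq_x; case: x_notin; exists b.
Qed.

End Lmul.

Section SemigroupAlgebra.
Variables (K : fieldType) (R : realType) (n : nat) (V : seq 'rV[R]_n).
Implicit Types f g : Lpoly K n.

Lemma inKSh0 : inKSh V (0 : Lpoly K n).
Proof. by move=> x; rewrite msupp0 in_fset0. Qed.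

Lemma inKShD f g : inKSh V f -> inKSh V g -> inKSh V (f + g).
Proof. by move=> Sf Sg x /(fsubsetP (msuppD_le f g)); rewrite in_fsetU => /orP [/Sf|/Sg]. Qed.

Lemma inKShN f : inKSh V f -> inKSh V (- f).
Proof. by move=> Sf x; rewrite msuppN => /Sf. Qed.

Lemma inKShU (c : K) t : inSMh V t -> inKSh V (<< c *g t >> : Lpoly K n).
Proof. by move=> St x /(fsubsetP msuppU_le); rewrite in_fset1 => /eqP ->. Qed.

Variable lt : pt n -> pt n -> Prop.
Hypothesis ltM : monomial_order V lt.

Lemma isLM_exists f : inKSh V f -> f != 0 -> exists m, isLM V lt f m.
Proof.
move=> Sf f_neq0.
have supp_neq0 : (msupp f : seq _) != [::].
  by apply: contraNneq f_neq0 => supp0; rewrite (monalgE f) supp0 big_nil.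
by have [m mf m_max] := gsparse_lt_max_seq ltM supp_neq0 Sf; exists m.
Qed.

Lemma isLM_uniq f m1 m2 : inKSh V f -> isLM V lt f m1 -> isLM V lt f m2 -> m1 = m2.
Proof.
move=> Sf [m1f m1_max] [m2f m2_max]; apply: contrapT => neq_m.
have lt21 := m1_max m2 m2f (nesym neq_m); have lt12 := m2_max m1 m1f neq_m.
have S1 := Sf _ m1f; have S2 := Sf _ m2f.
exact: (gsparse_lt_irr ltM S1 (gsparse_lt_trans ltM S1 S2 S1 lt12 lt21)).
Qed.

End SemigroupAlgebra.

Section Reduction.
Variables (K : fieldType) (R : realType) (n : nat) (V : seq 'rV[R]_n).
Variable lt : pt n -> pt n -> Prop.
Hypothesis ltM : monomial_order V lt.
Implicit Types f g h : Lpoly K n.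

Definition in_lmul_span (G : seq (Lpoly K n)) f :=
  exists c : 'I_(size G) -> Lpoly K n,
    (forall i, inKSh V (c i)) /\ f = \sum_(i < size G) lmul (c i) G`_i.

Lemma in_lmul_span0 G : in_lmul_span G 0.
Proof.
exists (fun=> 0); split => [i|]; first exact: inKSh0.
by rewrite big1 // => i _; rewrite lmul0l.
Qed.

Lemma in_lmul_spanD G f g h : in_lmul_span G f -> g \in G -> inKSh V h ->
  in_lmul_span G (f + lmul h g).
Proof.
move=> [c [Sc ->]] gG Sh.
have lt_j : (index g G < size G)%N by rewrite index_mem.
pose j := Ordinal lt_j.
exists (fun i => c i + (if i == j then h else 0)); split.
  by move=> i; apply: inKShD => //; case: eqP => _; [apply: Sh | apply: inKSh0].
rewrite [RHS](eq_bigr _ (fun i _ => lmulDl (c i) _ G`_i)) big_split /=.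
congr (_ + _).
rewrite (bigD1 j) //= eqxx nth_index // big1 ?addr0 // => i /negbTE ->.
exact: lmul0l.
Qed.

Lemma msupp_reduce_lt f g m mg t :
  inKSh V f -> inKSh V g -> isLM V lt f m -> isLM V lt g mg ->
  inSMh V t -> mg + t = m -> (sdeg V mg + sdeg V t = sdeg V m)%N ->
  forall x, x \in msupp (f + lmul << - (f@_m / g@_mg) *g t >> g) ->
    gsparse_lt V lt x m.
Proof.
move=> Sf Sg [mf m_max] [mg_g mg_max] St eq_m sdeg_m x.
have coef_m : (f + lmul << - (f@_m / g@_mg) *g t >> g)@_m = 0.
  have := mcoeff_lmulU (- (f@_m / g@_mg)) t g mg.
  rewrite addrC eq_m mcoeffD => ->.
  by rewrite mulNr divfK ?subrr // mcoeff_neq0.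
move=> /[dup] xs /(fsubsetP (msuppD_le _ _)); rewrite in_fsetU.
have neq_xm : x <> m by move=> eq_x; move: xs; rewrite eq_x -mcoeff_neq0 coef_m eqxx.
case/orP => [/m_max/(_ neq_xm) //|/msupp_lmulU [b bg eq_x]].
rewrite eq_x in neq_xm *.
have neq_b : b <> mg by move=> eq_b; apply: neq_xm; rewrite eq_b addrC.
rewrite -eq_m addrC.
by apply: (gsparse_lt_addr ltM (Sg _ bg) (Sg _ mg_g) St _ (mg_max b bg neq_b)); rewrite eq_m.
Qed.

Variable I : Lpoly K n -> Prop.
Hypothesis idealI : is_ideal V I.

Lemma lead_div_in_lmul_span (G : seq (Lpoly K n)) :
  (forall g, g \in G -> I g) ->
  (forall f, I f -> f <> 0 -> exists g, g \in G /\
     exists mg mf, [/\ isLM V lt g mg, isLM V lt f mf & ddiv V mg mf]) ->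
  forall f, I f -> in_lmul_span G f.
Proof.
move=> GI G_div; case: idealI => IS _ Iadd Imul.
suff span_lead m : inSMh V m -> forall f, I f -> f != 0 -> isLM V lt f m -> in_lmul_span G f.
  move=> f If; have [->|f_neq0] := eqVneq f 0; first exact: in_lmul_span0.
  have [m LMf] := isLM_exists ltM (IS f If) f_neq0.
  exact: span_lead (IS f If _ LMf.1) f If f_neq0 LMf.
move: m; apply: (gsparse_lt_ind ltM) => m Sm IHm f If f_neq0 LMf.
have f_ne0 : f <> 0 by apply/eqP.
have [g [gG [mg [mf [LMg LMf_mf [t [St eq_mf sdeg_mf]]]]]]] := G_div f If f_ne0.
have eq_m : mf = m := isLM_uniq ltM (IS f If) LMf_mf LMf.
rewrite eq_m in eq_mf sdeg_mf.
set h := << - (f@_m / g@_mg) *g t >>.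
have Sh : inKSh V h by apply: inKShU.
have Ig := GI g gG.
have If' : I (f + lmul h g) by apply: Iadd => //; apply: Imul.
have span' : in_lmul_span G (f + lmul h g).
  have [->|f'_neq0] := eqVneq (f + lmul h g) 0; first exact: in_lmul_span0.
  have [m' LMr] := isLM_exists ltM (IS _ If') f'_neq0.
  have lt_m'm := msupp_reduce_lt (IS f If) (IS g Ig) LMf LMg St eq_mf sdeg_mf LMr.1.
  exact: IHm (IS _ If' _ LMr.1) lt_m'm _ If' f'_neq0 LMr.
have -> : f = f + lmul h g + lmul (- h) g by rewrite lmulNl addrK.
exact: in_lmul_spanD span' gG (inKShN Sh).
Qed.
End Reduction.

Lemma shortest_decomp_choice (R : realType) (n : nat) (V : seq 'rV[R]_n) :
  {dec : pt n -> seq (pt n) & forall s, inSM V s -> shortest_decomp V s (dec s)}.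
Proof.
apply: (@choice _ _ (fun s ts => inSM V s -> shortest_decomp V s ts)) => s.
have [/shortest_decomp_exists [ts ?]|nSs] := pselect (inSM V s).
  by exists ts.
by exists [::].
Qed.

Section SparseGroebnerBasis.
Variables (R : realType) (n : nat) (V : seq 'rV[R]_n).
Hypothesis zeroM : in_conv V 0.

Local Notation dA := (deltaA V).

Lemma ddiv_of_decomp a b (u : seq (pt n)) : inSMh V a -> inSMh V b ->
  (forall t, t \in u -> latt V t) -> b.1 = a.1 + \sum_(t <- u) t ->
  dA b.1 = (dA a.1 + size u)%N -> a.2 - (dA a.1)%:Z <= b.2 - (dA b.1)%:Z ->
  ddiv V a b.
Proof.
move: a b => [s d] [s' d'] Sa Sb uL /= eq_s' dA_s' le_exc.
have [e /= eq_d] := inSMh_deg Sa; have [e' /= eq_d'] := inSMh_deg Sb.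
have Su : inSMh V (\sum_(t <- u) t, (size u)%:Z) by exists u.
have le_dAu := deltaA_leq Su.
have le_dAs' := deltaAD_le (inSMh_inSM Sa) (inSMh_inSM Su).
rewrite eq_d eq_d' in le_exc *; rewrite /= -eq_s' in le_dAs'.
exists (\sum_(t <- u) t, (e' - e)%N%:Z); split.
- by apply: (inSMh_raise zeroM Su); lia.
- by rewrite hptD -eq_s'; congr (_, _); lia.
- by apply/eqP; rewrite /sdeg /= eqn_leq le_dAs' andbT dA_s' leq_add2l.
Qed.

Variable P0 : seq (pt n).
Hypothesis latt_P0 : forall s, latt V s -> s \in P0.
Variable dec : pt n -> seq (pt n).
Hypothesis decP : forall s, inSM V s -> shortest_decomp V s (dec s).

Definition code (p : hpt n) (j : nat) : nat :=
  if (j < size P0)%N then count_mem (nth 0 P0 j) (dec p.1) else (`|p.2| - dA p.1)%N.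

Lemma ddiv_of_code_le a b : inSMh V a -> inSMh V b ->
  dominated (size P0).+1 code a b -> ddiv V a b.
Proof.
move=> Sa Sb le_code.
have [decaL sum_a size_a] := decP (inSMh_inSM Sa).
have [decbL sum_b size_b] := decP (inSMh_inSM Sb).
have le_count y : (count_mem y (dec a.1) <= count_mem y (dec b.1))%N.
  have [yP0|yP0] := boolP (y \in P0).
    have := le_code (index y P0); rewrite /code index_mem yP0 nth_index //.
    by apply; rewrite ltnS index_size.
  suff -> : count_mem y (dec a.1) = 0%N by [].
  by apply/count_memPn; apply: contraNN yP0 => /decaL /latt_P0.
have [v /perm_to_subseq [u perm_u] perm_v] := (count_subseqP _ _).1 le_count.
have {perm_u perm_v} perm_ab : perm_eq (dec b.1) (dec a.1 ++ u).
  by rewrite (permPl perm_u) perm_cat2r perm_sym.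
apply: (ddiv_of_decomp (u := u)) => //.
- by move=> t tu; apply: decbL; rewrite (perm_mem perm_ab) mem_cat tu orbT.
- by rewrite sum_b (perm_big _ perm_ab) big_cat /= -sum_a.
- by rewrite -size_a -size_b (perm_size perm_ab) size_cat.
have := le_code (size P0) (ltnSn _); rewrite /code ltnn.
have := deltaA_le_deg Sa; have := deltaA_le_deg Sb.
have [e ->] := inSMh_deg Sa; have [e' ->] := inSMh_deg Sb; rewrite !lez_nat /=.
lia.
Qed.

Variables (K : fieldType) (lt : pt n -> pt n -> Prop) (I : Lpoly K n -> Prop).
Hypotheses (ltM : monomial_order V lt) (idealI : is_ideal V I).

Lemma sparse_GB_exists : exists G, sparse_GB V lt I G.
Proof.
case: (idealI) => IS _ _ _.
have [lm lmP] : {lm : Lpoly K n -> hpt n & forall f, I f -> f != 0 -> isLM V lt f (lm f)}.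
  apply: (@choice _ _ (fun f m => I f -> f != 0 -> isLM V lt f m)) => f.
  have [[If f_neq0]|not_If] := pselect (I f /\ f != 0); last first.
    by exists 0 => If f_neq0; case: not_If.
  by have [m LMf] := isLM_exists ltM (IS f If) f_neq0; exists m.
have [G [GI G_basis]] := dickson (size P0).+1 (code \o lm) (fun f => I f /\ f != 0).
have G_div f : I f -> f <> 0 -> exists g, g \in G /\
    exists mg mf, [/\ isLM V lt g mg, isLM V lt f mf & ddiv V mg mf].
  move=> If /eqP f_neq0; have [g gG le_code] := G_basis f (conj If f_neq0).
  have [Ig g_neq0] := GI g gG; have LMg := lmP g Ig g_neq0; have LMf := lmP f If f_neq0.
  exists g; split => //; exists (lm g), (lm f); split => //.
  exact: ddiv_of_code_le (IS g Ig _ LMg.1) (IS f If _ LMf.1) le_code.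
have G_I g : g \in G -> I g by case/GI.
exists G; split => // f If.
exact: (lead_div_in_lmul_span ltM idealI G_I G_div If).
Qed.

End SparseGroebnerBasis.

Theorem mainTheorem4
  (K : fieldType) (charK0 : [pchar K] =i pred0)
  (R : realType) (n : nat) (V : seq 'rV[R]_n)
  (zeroM : in_conv V 0)
  (pointedSM : pointed (inSM V)) (pointedSMh : pointed (inSMh V))
  (lt : pt n -> pt n -> Prop) (ltM : monomial_order V lt)
  (I : Lpoly K n -> Prop) (idealI : is_ideal V I)
  (homI : homogeneous_ideal I) :
  exists G : seq (Lpoly K n), sparse_GB V lt I G.
Proof.
have [P0 latt_P0] := latt_finite V.
have [dec decP] := shortest_decomp_choice V.
exact: (sparse_GB_exists zeroM latt_P0 decP ltM idealI).
Qed.
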